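(* Let $G$ be a commutative group, $G'$ a subgroup, $1<p<\infty$, and $f\in\ell^1(G')$ nonnegative (viewed also as a function on $G$, extended by zero). Then $\gamma_p(f,G)=\gamma_p(f,G')$.
   Context: For nonnegative functions $f,g$ on a commutative group $K$, $(f\star g)(x)=\max_t f(t)g(x-t)$ (max-convolution). For nonnegative $f\in\ell^1(K)$ and $1/p+1/q=1$, $\gamma_p(f,K)=\inf_{g,h}\frac{\|f\star g\star h\|_1}{\|g\|_p\|h\|_q}$, the infimum over nonzero nonnegative $g,h\in\ell^1(K)$. *)

From HB Require Import structures.
From mathcomp Require Import all_boot all_order all_algebra.
From mathcomp Require Import all_classical all_reals all_analysis.
Set Implicit Arguments. Unset Strict Implicit. Unset Printing Implicit Defensive.
Import Order.TTheory GRing.Theory Num.Theory.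
Local Open Scope classical_set_scope.
Local Open Scope ring_scope.

Section MaxConv.
Variables (R : realType) (K : zmodType).

Definition ell1 (f : K -> R) : Prop := summable [set: K] (fun x => (f x)%:E).

Definition nonneg (f : K -> R) : Prop := forall x, 0 <= f x.

Definition lpnorm (p : R) (g : K -> R) : R :=
  powR (fine (\esum_(x in [set: K]) (powR `|g x| p)%:E)) p^-1.

(* max-convolution (f * g)(x) = max_t f(t) g(x - t); written as a supremum,
   which is attained for nonnegative l^1 functions *)
Definition maxconv (f g : K -> R) : K -> R :=
  fun x => sup [set f t * g (x - t) | t in [set: K]].

(* conjugate exponent q with 1/p + 1/q = 1 *)
Definition conj_exp (p : R) : R := p / (p - 1).

Definition gamma (p : R) (f : K -> R) : R :=
  inf [set r | exists g h : K -> R,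
         [/\ ell1 g, nonneg g & g <> (fun _ => 0)] /\
         [/\ ell1 h, nonneg h & h <> (fun _ => 0)] /\
             r = lpnorm 1 (maxconv (maxconv f g) h)
                   / (lpnorm p g * lpnorm (conj_exp p) h)].

End MaxConv.

Definition ext_zero (R : realType) (K G : zmodType) (iota : K -> G)
  (f : K -> R) : G -> R :=
  fun x => match pselect (exists k, iota k = x) with
           | left e => f (projT1 (cid e))
           | right _ => 0
           end.

(* Extending by zero preserves admissibility, norms and max-convolutions, so
   gamma_p(f, G) <= gamma_p(f, G').  Conversely, let c = gamma_p(f, G'), fix
   g, h on G and a set B of representatives of the cosets of G', and slice
   g_a(k) = g(a + k), h_b(k) = h(b + k) for a, b in B.  The max-convolution
   f * g_a * h_b is dominated by (f * g * h)(a + b + .), and for fixed a the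
   points a + b + k (b in B, k in G') are pairwise distinct.  Hence, with
   u_a = |g_a|_p and v_b = |h_b|_q,
     c u_a |v|_1 <= sum_b |f * g_a * h_b|_1 <= |f * g * h|_1,
   and symmetrically c v_b |u|_1 <= |f * g * h|_1.  As |g|_p = |u|_p,
   |h|_q = |v|_q and |u|_p^p <= |u|_oo^(p-1) |u|_1, the two bounds multiply to
   c |g|_p |h|_q <= |f * g * h|_1 because 1/p + 1/q = 1. *)

From HB Require Import structures.
From mathcomp Require Import all_boot all_order all_algebra.
From mathcomp Require Import all_classical all_reals all_analysis.
From mathcomp.algebra_tactics Require Import ring lra.
Set Implicit Arguments. Unset Strict Implicit. Unset Printing Implicit Defensive.
Import Order.TTheory GRing.Theory Num.Theory.
Local Open Scope classical_set_scope.
Local Open Scope ring_scope.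

Section esum_lemmas.
Context {R : realType} {T : choiceType}.
Implicit Types (a : T -> \bar R) (A B : set T).
Local Open Scope ereal_scope.

Lemma ge0_esumZl (c : R) a A : (0 <= c)%R -> (forall x, 0 <= a x) ->
  \esum_(i in A) (c%:E * a i) = c%:E * \esum_(i in A) a i.
Proof.
move=> c0 a0; rewrite /esum -ereal_supZl//; last first.
  by apply/set0P; exists 0; exists set0; [exact: fsets_set0|rewrite fsbig_set0].
congr ereal_sup; apply/seteqP; split => x /=.
  move=> [X fX <-]; exists (\sum_(i \in X) a i); first by exists X.
  by rewrite ge0_mule_fsumr.
by move=> [_ [X fX <-] <-]; exists X => //; rewrite ge0_mule_fsumr.
Qed.

Lemma le_esum_subset a A B : A `<=` B ->
  \esum_(i in A) a i <= \esum_(i in B) a i.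
Proof.
move=> AB; apply: ereal_sup_le => _ [X [fX XA] <-].
by exists X => //; split => //; exact: subset_trans XA AB.
Qed.

Lemma le_term_esum a A x : A x -> a x <= \esum_(i in A) a i.
Proof.
move=> Ax; apply: esum_ge; exists [set x]; last by rewrite fsbig_set1.
by split; [exact: finite_set1 | move=> y ->].
Qed.

Lemma exchange_esum (T' : choiceType) (a : T -> T' -> \bar R) :
  (forall i j, 0 <= a i j) ->
  \esum_(i in [set: T]) \esum_(j in [set: T']) a i j =
  \esum_(j in [set: T']) \esum_(i in [set: T]) a i j.
Proof.
move=> a0; rewrite !esum_esum//.
rewrite (reindex_esum ([set: T'] `*`` (fun=> [set: T]))
  ([set: T] `*`` (fun=> [set: T'])) (fun z => (z.2, z.1)))//.
split => //; first by move=> [? ?] [? ?] _ _ /= [-> ->].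
by move=> [x y] _; exists (y, x).
Qed.

End esum_lemmas.

Lemma powR_le_mul {R : realType} (x M r : R) : 0 <= x -> x <= M -> 1 <= r ->
  powR x r <= powR M (r - 1) * x.
Proof.
move=> x0 xM r1; rewrite -mulr_powRB1 //; last by lra.
rewrite mulrC; apply: ler_wpM2r => //; apply: ge0_ler_powR => //; first by lra.
by rewrite nnegrE; exact: le_trans xM.
Qed.

Section conj_exp.
Context {R : realType} (p : R) (p1 : 1 < p).

Let p_neq0 : p != 0. Proof. by rewrite gt_eqF// (lt_trans ltr01). Qed.
Let p_sub1_neq0 : p - 1 != 0. Proof. by rewrite subr_eq0 gt_eqF. Qed.

Lemma conj_exp_gt1 : 1 < conj_exp p.
Proof. by rewrite /conj_exp ltr_pdivlMr ?subr_gt0// mul1r gtrBl ltr01. Qed.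

Lemma inv_conj_exp : (conj_exp p)^-1 = 1 - p^-1.
Proof. by rewrite /conj_exp; field; apply/andP. Qed.

Lemma conj_expK : conj_exp (conj_exp p) = p.
Proof.
by rewrite /conj_exp; field; rewrite p_sub1_neq0 mulN1r opprB addrC subrK oner_neq0.
Qed.

End conj_exp.

Section lp_interpolation.
Context {R : realType} {I : choiceType} (B : set I).
Local Open Scope ereal_scope.

Lemma esum_powR_le (u : I -> R) (M r : R) : (1 <= r)%R ->
  (forall a, 0 <= u a)%R -> (forall a, B a -> u a <= M)%R ->
  \esum_(a in B) (powR (u a) r)%:E <=
  (powR M (r - 1))%:E * \esum_(a in B) (u a)%:E.
Proof.
move=> r1 u0 uM; rewrite -ge0_esumZl ?powR_ge0//.
by apply: le_esum => a Ba; rewrite -EFinM lee_fin powR_le_mul ?uM.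
Qed.

Lemma powR_esum_le (u : I -> R) (M U p : R) : (1 < p)%R ->
  (forall a, 0 <= u a)%R -> (forall a, B a -> u a <= M)%R ->
  \esum_(a in B) (u a)%:E = U%:E ->
  (powR (fine (\esum_(a in B) (powR (u a) p)%:E)) p^-1 <=
   powR M (conj_exp p)^-1 * powR U p^-1)%R.
Proof.
move=> p1 u0 uM uU; have p0 : (0 < p)%R := lt_trans ltr01 p1.
have U0 : (0 <= U)%R by rewrite -lee_fin -uU esum_ge0// => a _; rewrite lee_fin.
have := esum_powR_le (ltW p1) u0 uM; rewrite uU -EFinM => le_sum.
have sum_fin : \esum_(a in B) (powR (u a) p)%:E \is a fin_num.
  rewrite ge0_fin_numE ?(le_lt_trans le_sum (ltry _))//.
  by apply: esum_ge0 => a _; rewrite lee_fin powR_ge0.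
rewrite -(fineK sum_fin) lee_fin in le_sum.
apply: le_trans (ge0_ler_powR _ _ _ le_sum) _.
- by rewrite invr_ge0 ltW.
- by rewrite nnegrE fine_ge0// esum_ge0// => a _; rewrite lee_fin powR_ge0.
- by rewrite nnegrE mulr_ge0 ?powR_ge0.
by rewrite powRM ?powR_ge0// -powRrM inv_conj_exp// mulrBl mul1r mulfV// gt_eqF.
Qed.

Lemma esum_gt0_fin (w : I -> R) (c S : R) b : (forall a, 0 <= w a)%R ->
  B b -> (0 < w b)%R -> (0 < c)%R ->
  (c%:E * (\esum_(a in B) (w a)%:E) <= S%:E)%E ->
  exists2 W : R, \esum_(a in B) (w a)%:E = W%:E & (0 < W)%R.
Proof.
move=> w0 Bb wb c0; have := le_term_esum (fun a => (w a)%:E) Bb.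
case: (\esum_(a in B) (w a)%:E) => [W | | ] /= wbW.
- by exists W => //; rewrite -lte_fin (lt_le_trans _ wbW) ?lte_fin.
- by rewrite mulry gtr0_sg// mul1e leye_eq.
- by rewrite leeNy_eq in wbW.
Qed.

Lemma interpolation_lp_lq (u v : I -> R) (p S : R) : (1 < p)%R ->
  (forall a, 0 <= u a)%R -> (forall b, 0 <= v b)%R ->
  (exists2 a, B a & 0 < u a)%R -> (exists2 b, B b & 0 < v b)%R ->
  (forall a, B a -> (u a)%:E * (\esum_(b in B) (v b)%:E) <= S%:E)%E ->
  (forall b, B b -> (v b)%:E * (\esum_(a in B) (u a)%:E) <= S%:E)%E ->
  (powR (fine (\esum_(a in B) (powR (u a) p)%:E)) p^-1 *
   powR (fine (\esum_(b in B) (powR (v b) (conj_exp p))%:E)) (conj_exp p)^-1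
   <= S)%R.
Proof.
move=> p1 u0 v0 [a0 Ba0 ua0] [b0 Bb0 vb0] uS vS; set q := conj_exp p.
have [U Usum U0] := esum_gt0_fin u0 Ba0 ua0 vb0 (vS b0 Bb0).
have [V Vsum V0] := esum_gt0_fin v0 Bb0 vb0 ua0 (uS a0 Ba0).
have S0 : (0 <= S)%R.
  by rewrite -lee_fin (le_trans _ (uS a0 Ba0))// Vsum -EFinM lee_fin mulr_ge0 ?ltW.
have uM a : B a -> (u a <= S / V)%R.
  by move=> Ba; rewrite ler_pdivlMr// -lee_fin EFinM -Vsum uS.
have vM b : B b -> (v b <= S / U)%R.
  by move=> Bb; rewrite ler_pdivlMr// -lee_fin EFinM -Usum vS.
have P_le := powR_esum_le p1 u0 uM Usum.
have := powR_esum_le (conj_exp_gt1 p1) v0 vM Vsum; rewrite conj_expK// => Q_le.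
apply: le_trans (ler_pM (powR_ge0 _ _) (powR_ge0 _ _) P_le Q_le) _.
have -> : (powR (S / V) q^-1 * powR U p^-1 * (powR (S / U) p^-1 * powR V q^-1) =
          powR (S / V) q^-1 * powR V q^-1 * (powR (S / U) p^-1 * powR U p^-1))%R.
  by ring.
rewrite -!powRM ?divr_ge0 ?(ltW U0) ?(ltW V0)// !divfK ?gt_eqF// -powRD.
  by rewrite /q inv_conj_exp// subrK powRr1.
by rewrite /q inv_conj_exp// subrK oner_eq0.
Qed.

End lp_interpolation.

Section maxconv_lemmas.
Context {R : realType} {T : zmodType}.
Implicit Types (phi psi : T -> R).

Lemma maxconv_le phi psi x c : (forall t, phi t * psi (x - t) <= c) ->
  maxconv phi psi x <= c.
Proof.
move=> le_c; apply: ge_sup => [|_ [t _ <-]]; last exact: le_c.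
by exists (phi 0 * psi (x - 0)), 0.
Qed.

Lemma maxconv_ub phi psi x t : nonneg phi -> nonneg psi ->
  has_ubound (range phi) -> has_ubound (range psi) ->
  phi t * psi (x - t) <= maxconv phi psi x.
Proof.
move=> phi0 psi0 [M1 ub1] [M2 ub2]; apply: ub_le_sup; last by exists t.
exists (M1 * M2) => _ [s _ <-].
by apply: ler_pM; [exact: phi0 | exact: psi0 | exact/ub1/imageT | exact/ub2/imageT].
Qed.

Lemma maxconv_ge0 phi psi : nonneg phi -> nonneg psi ->
  has_ubound (range phi) -> has_ubound (range psi) -> nonneg (maxconv phi psi).
Proof.
move=> phi0 psi0 ub1 ub2 x.
by apply: le_trans (maxconv_ub x 0 phi0 psi0 ub1 ub2); rewrite mulr_ge0.
Qed.

Lemma le_maxconv_l phi phi' psi x : (forall t, phi t <= phi' t) ->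
  nonneg phi' -> nonneg psi -> has_ubound (range phi') -> has_ubound (range psi) ->
  maxconv phi psi x <= maxconv phi' psi x.
Proof.
move=> le_phi phi'0 psi0 ub1 ub2; apply: maxconv_le => t.
apply: le_trans (maxconv_ub x t phi'0 psi0 ub1 ub2).
by rewrite ler_wpM2r.
Qed.

End maxconv_lemmas.

Section l1.
Context {R : realType} {T : zmodType}.
Implicit Types (phi psi : T -> R).
Local Open Scope ereal_scope.

Definition l1sum phi : \bar R := \esum_(x in [set: T]) (phi x)%:E.

Lemma l1sum_ge0 phi : nonneg phi -> 0 <= l1sum phi.
Proof. by move=> phi0; apply: esum_ge0 => x _; rewrite lee_fin. Qed.

Lemma ell1E phi : nonneg phi -> ell1 phi = (l1sum phi < +oo).
Proof.
move=> phi0; rewrite /ell1 /summable /l1sum; congr (_ < _).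
by apply: eq_esum => x _; rewrite abse_EFin ger0_norm.
Qed.

Lemma l1sumE phi : nonneg phi -> ell1 phi -> l1sum phi = (fine (l1sum phi))%:E.
Proof. by move=> phi0 l1; rewrite fineK// ge0_fin_numE ?l1sum_ge0// -ell1E. Qed.

Lemma ell1_ubound phi : nonneg phi -> ell1 phi -> has_ubound (range phi).
Proof.
move=> phi0 l1; exists (fine (l1sum phi)) => _ [x _ <-].
by rewrite -lee_fin -l1sumE//; exact: le_term_esum.
Qed.

Lemma lpnorm_ge0 r phi : (0 <= lpnorm r phi)%R.
Proof. exact: powR_ge0. Qed.

Lemma lpnorm1E phi : nonneg phi -> ell1 phi -> (lpnorm 1 phi)%:E = l1sum phi.
Proof.
move=> phi0 l1; rewrite /lpnorm invr1 powRr1; last first.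
  by apply: fine_ge0; apply: esum_ge0 => x _; rewrite lee_fin powR_ge0.
rewrite [RHS]l1sumE//; congr (fine _)%:E.
by apply: eq_esum => x _; rewrite ger0_norm// powRr1.
Qed.

Lemma lpnormE r phi : nonneg phi ->
  lpnorm r phi = powR (fine (l1sum (fun x => powR (phi x) r))) r^-1.
Proof.
move=> phi0; rewrite /lpnorm /l1sum; congr (powR (fine _) _).
by apply: eq_esum => x _; rewrite ger0_norm.
Qed.

Lemma ell1_powR r phi : (1 <= r)%R -> nonneg phi -> ell1 phi ->
  ell1 (fun x => powR (phi x) r).
Proof.
move=> r1 phi0 l1; have [M ub] := ell1_ubound phi0 l1.
rewrite ell1E => [|x]; last exact: powR_ge0.
apply: le_lt_trans (esum_powR_le r1 phi0 (fun x _ => ub _ (imageT phi x))) _.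
by rewrite -/(l1sum phi) l1sumE// -EFinM ltry.
Qed.

Lemma powR_lpnorm r phi : (1 <= r)%R -> nonneg phi -> ell1 phi ->
  (powR (lpnorm r phi) r)%:E = l1sum (fun x => powR (phi x) r).
Proof.
move=> r1 phi0 l1.
have pow0 : nonneg (fun x => powR (phi x) r) by move=> x; exact: powR_ge0.
rewrite lpnormE// -powRrM mulVf ?gt_eqF ?(lt_le_trans ltr01)//.
rewrite powRr1 ?fine_ge0 ?l1sum_ge0//.
by rewrite -l1sumE//; exact: ell1_powR.
Qed.

Lemma lpnorm_gt0 r phi x : (1 <= r)%R -> nonneg phi -> ell1 phi -> phi x != 0%R ->
  (0 < lpnorm r phi)%R.
Proof.
move=> r1 phi0 l1 phix; rewrite lpnormE//; apply: powR_gt0.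
rewrite -lte_fin -l1sumE; [|by move=> y; exact: powR_ge0|exact: ell1_powR].
apply: (@lt_le_trans _ _ (powR (phi x) r)%:E); last exact: le_term_esum.
by rewrite lte_fin powR_gt0// lt_def phix phi0.
Qed.

Lemma lpnorm0 (r : R) : r != 0%R -> lpnorm r (fun _ : T => 0%R) = 0%R.
Proof.
move=> r0; rewrite /lpnorm esum1 => [|x _]; last by rewrite normr0 powR0.
by rewrite powR0 ?invr_eq0.
Qed.

Lemma maxconv_le_esum phi psi x : nonneg phi -> nonneg psi ->
  (maxconv phi psi x)%:E <= \esum_(t in [set: T]) (phi t * psi (x - t))%:E.
Proof.
move=> phi0 psi0.
have : forall t, (phi t * psi (x - t))%:E <=
                 \esum_(s in [set: T]) (phi s * psi (x - s))%:E.
  by move=> t; exact: le_term_esum.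
have : 0 <= \esum_(s in [set: T]) (phi s * psi (x - s))%:E.
  by apply: esum_ge0 => t _; rewrite lee_fin mulr_ge0.
case: (\esum_(s in [set: T]) _) => [e | | ] //= _ le_e; last by rewrite leey.
by rewrite lee_fin; apply: maxconv_le => t; rewrite -lee_fin.
Qed.

Lemma l1sum_maxconv_le phi psi : nonneg phi -> nonneg psi -> ell1 psi ->
  l1sum (maxconv phi psi) <= l1sum phi * l1sum psi.
Proof.
move=> phi0 psi0 l2.
have shift t :
    \esum_(x in [set: T]) (phi t * psi (x - t))%:E = (phi t)%:E * l1sum psi.
  under eq_esum do rewrite EFinM.
  rewrite ge0_esumZl//; last by move=> x; rewrite lee_fin.
  congr (_ * _).
  rewrite /l1sum [RHS](reindex_esum [set: T] [set: T] (fun y => (y - t)%R))//.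
  split => //; first by move=> y y' _ _ /addIr.
  by move=> y _; exists (y + t)%R => //; rewrite addrK.
apply: (@le_trans _ _
  (\esum_(x in [set: T]) \esum_(t in [set: T]) (phi t * psi (x - t))%:E)).
  by apply: le_esum => x _; exact: maxconv_le_esum.
rewrite exchange_esum => [|x t]; last by rewrite lee_fin mulr_ge0.
under eq_esum do rewrite shift muleC.
by rewrite [l1sum psi]l1sumE// ge0_esumZl ?fine_ge0 ?l1sum_ge0// muleC.
Qed.

Lemma ell1_maxconv phi psi : nonneg phi -> nonneg psi -> ell1 phi -> ell1 psi ->
  ell1 (maxconv phi psi).
Proof.
move=> phi0 psi0 l1 l2.
rewrite ell1E; last first.
  exact: maxconv_ge0 phi0 psi0 (ell1_ubound phi0 l1) (ell1_ubound psi0 l2).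
apply: le_lt_trans (l1sum_maxconv_le phi0 psi0 l2) _.
by rewrite l1sumE// [l1sum psi]l1sumE// -EFinM ltry.
Qed.

End l1.

Section gamma.
Context {R : realType} {T : zmodType}.
Implicit Types (f g h : T -> R) (p : R).

Definition admissible g := [/\ ell1 g, nonneg g & g <> (fun _ => 0)].

Definition gamma_ratio p f g h :=
  lpnorm 1 (maxconv (maxconv f g) h) / (lpnorm p g * lpnorm (conj_exp p) h).

Definition gamma_ratios p f :=
  [set r | exists g h, admissible g /\ admissible h /\ r = gamma_ratio p f g h].

Lemma gammaE p f : gamma p f = inf (gamma_ratios p f).
Proof. by []. Qed.

Lemma gamma_ratio_ge0 p f g h : 0 <= gamma_ratio p f g h.
Proof. by rewrite divr_ge0 ?mulr_ge0 ?lpnorm_ge0. Qed.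

Lemma admissible_neq0 g : admissible g -> exists x, g x != 0.
Proof.
case=> _ _ g_neq0; apply: contrapT => g_eq0; apply: g_neq0; apply/funext => x.
by apply/eqP; apply: contrapT => gx; apply: g_eq0; exists x; exact/negP.
Qed.

Lemma lpnorm_admissible_gt0 r g : 1 <= r -> admissible g -> 0 < lpnorm r g.
Proof.
move=> r1 adm_g; have [x gx] := admissible_neq0 adm_g.
by case: adm_g => gl g0 _; exact: lpnorm_gt0 gx.
Qed.

Definition delta0 : T -> R := fun x => (x == 0)%:R.

Lemma admissible_delta0 : admissible delta0.
Proof.
have d0 : nonneg delta0 by move=> x; rewrite /delta0; case: eqP.
split => //; last first.
  by move/(congr1 (fun d => d 0)); rewrite /delta0 eqxx; exact/eqP/oner_neq0.
rewrite ell1E// /l1sum (esumID [set 0]) => [|x _]; last by rewrite lee_fin.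
rewrite setTI esum_set1 ?lee_fin// esum1 ?adde0 ?ltry//.
by move=> x [_ /eqP x0]; rewrite /delta0 (negbTE x0).
Qed.

Lemma gamma_ratios_neq0 p f : gamma_ratios p f !=set0.
Proof.
by eexists; exists delta0, delta0; split; [|split]; [exact: admissible_delta0..|].
Qed.

Lemma gamma_ratios_lbound p f : has_lbound (gamma_ratios p f).
Proof. by exists 0 => _ [g [h [_ [_ ->]]]]; exact: gamma_ratio_ge0. Qed.

Lemma gamma_le_ratio p f g h : admissible g -> admissible h ->
  gamma p f <= gamma_ratio p f g h.
Proof.
move=> adm_g adm_h; rewrite gammaE; apply: (ge_inf (gamma_ratios_lbound p f)).
by exists g, h.
Qed.

Lemma le_gamma p f c :
  (forall g h, admissible g -> admissible h -> c <= gamma_ratio p f g h) ->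
  c <= gamma p f.
Proof.
move=> le_c; rewrite gammaE; apply: lb_le_inf (gamma_ratios_neq0 p f) _.
by move=> _ [g [h [adm_g [adm_h ->]]]]; exact: le_c.
Qed.

Lemma gamma_mul_le p f g h : 1 < p -> nonneg g -> ell1 g -> nonneg h -> ell1 h ->
  gamma p f * (lpnorm p g * lpnorm (conj_exp p) h) <=
  lpnorm 1 (maxconv (maxconv f g) h).
Proof.
move=> p1 g0 gl h0 hl.
have [->|PQ_neq0] := eqVneq (lpnorm p g * lpnorm (conj_exp p) h) 0.
  by rewrite mulr0 lpnorm_ge0.
have PQ_gt0 : 0 < lpnorm p g * lpnorm (conj_exp p) h.
  by rewrite lt_def PQ_neq0 mulr_ge0 ?lpnorm_ge0.
have p_neq0 : p != 0 by rewrite gt_eqF// (lt_trans ltr01).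
have q_neq0 : conj_exp p != 0 by rewrite gt_eqF// (lt_trans ltr01 (conj_exp_gt1 p1)).
rewrite -ler_pdivlMr//; apply: gamma_le_ratio; split => // zero; move: PQ_neq0.
- by rewrite zero lpnorm0// mul0r eqxx.
- by rewrite zero lpnorm0// mulr0 eqxx.
Qed.

End gamma.

Section ext_zero.
Context {R : realType} {G K : zmodType} (iota : {additive K -> G})
  (iota_inj : injective iota).
Implicit Types (phi psi : K -> R).
Local Notation ext := (ext_zero iota).

Lemma ext_zeroE phi k : ext phi (iota k) = phi k.
Proof.
rewrite /ext_zero; case: pselect => [e|]; last by case; exists k.
by case: cid => k' /= /iota_inj ->.
Qed.

Lemma ext_zero_out phi x : ~ (exists k, iota k = x) -> ext phi x = 0.
Proof. by move=> x_out; rewrite /ext_zero; case: pselect. Qed.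

Lemma ext_zeroP phi x : (exists2 k, x = iota k & ext phi x = phi k) \/ ext phi x = 0.
Proof.
have [[k <-]|x_out] := pselect (exists k, iota k = x).
  by left; exists k => //; rewrite ext_zeroE.
by right; rewrite ext_zero_out.
Qed.

Lemma nonneg_ext_zero phi : nonneg phi -> nonneg (ext phi).
Proof. by move=> phi0 x; case: (ext_zeroP phi x) => [[k _ ->]|->]. Qed.

Lemma esum_ext_zero (w : R -> \bar R) phi : w 0 = 0%E -> (forall y, (0 <= w y)%E) ->
  \esum_(x in [set: G]) w (ext phi x) = \esum_(k in [set: K]) w (phi k).
Proof.
move=> w0 w_ge0; rewrite (esumID (range iota))//.
rewrite [X in (_ + X)%E]esum1 ?adde0; last first.
  by move=> x [_ x_out]; rewrite ext_zero_out// => -[k kx]; apply: x_out; exists k.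
rewrite setTI (esum_image [set: K] iota (fun x => w (ext phi x))).
  by apply: eq_esum => k _; rewrite ext_zeroE.
by move=> x y _ _; exact: iota_inj.
Qed.

Lemma ell1_ext_zero phi : ell1 phi -> ell1 (ext phi).
Proof. by rewrite /ell1 /summable (esum_ext_zero (w := fun y => `|y%:E|%E))// abse0. Qed.

Lemma lpnorm_ext_zero r phi : r != 0 -> lpnorm r (ext phi) = lpnorm r phi.
Proof.
move=> r0; rewrite /lpnorm (esum_ext_zero (w := fun y => (powR `|y| r)%:E))//.
by rewrite normr0 powR0.
Qed.

Lemma admissible_ext_zero phi : admissible phi -> admissible (ext phi).
Proof.
case=> l1 phi0 phi_neq0; split; [exact: ell1_ext_zero | exact: nonneg_ext_zero |].
by move=> ext_eq0; apply: phi_neq0; apply/funext => k; rewrite -ext_zeroE ext_eq0.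
Qed.

Lemma maxconv_ext_zero phi psi : nonneg phi -> nonneg psi -> ell1 phi -> ell1 psi ->
  maxconv (ext phi) (ext psi) = ext (maxconv phi psi).
Proof.
move=> phi0 psi0 l1 l2.
have ub1 := ell1_ubound phi0 l1; have ub2 := ell1_ubound psi0 l2.
have ephi0 := nonneg_ext_zero phi0; have epsi0 := nonneg_ext_zero psi0.
have eub1 := ell1_ubound ephi0 (ell1_ext_zero l1).
have eub2 := ell1_ubound epsi0 (ell1_ext_zero l2).
have mc0 := nonneg_ext_zero (maxconv_ge0 phi0 psi0 ub1 ub2).
apply/funext => x; apply/le_anti/andP; split.
- apply: maxconv_le => t; case: (ext_zeroP phi t) => [[s -> ->]|->]; last by rewrite mul0r.
  have [[k <-]|x_out] := pselect (exists k, iota k = x).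
    by rewrite -raddfB !ext_zeroE; exact: maxconv_ub.
  rewrite [ext psi _]ext_zero_out ?mulr0// => -[j jx]; apply: x_out.
  by exists (s + j); rewrite raddfD jx addrC subrK.
- have [[k <-]|x_out] := pselect (exists k, iota k = x); last first.
    by rewrite ext_zero_out//; exact: maxconv_ge0.
  rewrite ext_zeroE; apply: maxconv_le => s.
  rewrite -(ext_zeroE phi s) -(ext_zeroE psi (k - s)) raddfB.
  exact: maxconv_ub.
Qed.

Lemma gamma_ratio_ext_zero (p : R) (f g h : K -> R) :
  1 < p -> nonneg f -> ell1 f -> admissible g -> admissible h ->
  gamma_ratio p (ext f) (ext g) (ext h) = gamma_ratio p f g h.
Proof.
move=> p1 f0 fl [gl g0 _] [hl h0 _].
have fg0 := maxconv_ge0 f0 g0 (ell1_ubound f0 fl) (ell1_ubound g0 gl).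
rewrite /gamma_ratio (maxconv_ext_zero f0 g0 fl gl).
rewrite (maxconv_ext_zero fg0 h0 (ell1_maxconv f0 g0 fl gl) hl).
rewrite !lpnorm_ext_zero ?oner_neq0 ?gt_eqF// (lt_trans ltr01)//.
exact: conj_exp_gt1.
Qed.

End ext_zero.

Section cosets.
Context {R : realType} {G K : zmodType} (iota : {additive K -> G})
  (iota_inj : injective iota).

Definition kcoset (x : G) : set G := [set y | exists k, y = x + iota k].
Definition coset_rep (x : G) : G := xget 0 (kcoset x).
Definition coset_reps : set G := [set a | coset_rep a = a].

Lemma kcoset_refl x : kcoset x x.
Proof. by exists 0; rewrite raddf0 addr0. Qed.

Lemma kcoset_coset_rep x : kcoset x (coset_rep x).
Proof. exact: xgetI (kcoset_refl x). Qed.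

Lemma eq_kcoset x y : kcoset x y -> kcoset y = kcoset x.
Proof.
move=> [k ->]; apply/seteqP; split => z [j ->].
  by exists (k + j); rewrite raddfD addrA.
by exists (j - k); rewrite raddfB -addrA [iota k + _]addrC subrK.
Qed.

Lemma coset_rep_eq x y : kcoset x y -> coset_rep y = coset_rep x.
Proof. by move=> xy; rewrite /coset_rep (eq_kcoset xy). Qed.

Lemma coset_reps_rep x : coset_reps (coset_rep x).
Proof. exact: coset_rep_eq (kcoset_coset_rep x). Qed.

Lemma coset_decomp x : exists k, x = coset_rep x + iota k.
Proof. by have [k ->] := kcoset_coset_rep x; exists (- k); rewrite raddfN addrK. Qed.

Lemma coset_decomp_uniq a a' k k' : coset_reps a -> coset_reps a' ->
  a + iota k = a' + iota k' -> a = a' /\ k = k'.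
Proof.
move=> rep_a rep_a' e.
have aa' : a = a'.
  have : kcoset a a' by exists (k - k'); rewrite raddfB addrA e addrK.
  by move/coset_rep_eq; rewrite rep_a rep_a'.
by split => //; subst a'; apply: iota_inj; exact: addrI e.
Qed.

Local Open Scope ereal_scope.

Lemma esum_cosets (w : G -> \bar R) : (forall x, 0 <= w x) ->
  \esum_(x in [set: G]) w x =
  \esum_(a in coset_reps) \esum_(k in [set: K]) w (a + iota k)%R.
Proof.
move=> w0; rewrite esum_esum//.
rewrite (reindex_esum (coset_reps `*`` (fun=> [set: K])) [set: G]
  (fun z => z.1 + iota z.2)%R)//.
split => //.
- move=> [a k] [a' k'] /set_mem[rep_a _] /set_mem[rep_a' _] /= e.
  by case: (coset_decomp_uniq rep_a rep_a' e) => /= -> ->.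
- move=> x _; have [k xk] := coset_decomp x.
  by exists (coset_rep x, k) => //; split => //; exact: coset_reps_rep.
Qed.

Lemma esum_translated_cosets_le (w : G -> \bar R) (c : G) : (forall x, 0 <= w x) ->
  \esum_(a in coset_reps) \esum_(k in [set: K]) w (c + a + iota k)%R <=
  \esum_(x in [set: G]) w x.
Proof.
move=> w0; rewrite esum_esum//.
rewrite -(esum_image (coset_reps `*`` (fun=> [set: K]))
  (fun z => c + z.1 + iota z.2)%R w).
  exact: le_esum_subset.
move=> [a k] [a' k'] /set_mem[rep_a _] /set_mem[rep_a' _] /=.
rewrite -!addrA => /addrI e.
by case: (coset_decomp_uniq rep_a rep_a' e) => /= -> ->.
Qed.

Lemma esum_coset_le (w : G -> \bar R) (a : G) :
  \esum_(k in [set: K]) w (a + iota k)%R <= \esum_(x in [set: G]) w x.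
Proof.
rewrite -(esum_image [set: K] (fun k => a + iota k)%R w); first exact: le_esum_subset.
by move=> k k' _ _ /addrI /iota_inj.
Qed.

End cosets.

Section slices.
Context {R : realType} {G K : zmodType} (iota : {additive K -> G})
  (iota_inj : injective iota).
Implicit Types (phi psi : G -> R).

Definition slice phi (a : G) : K -> R := fun k => phi (a + iota k).

Lemma slice_ext_zero (f : K -> R) : slice (ext_zero iota f) 0 = f.
Proof. by apply/funext => k; rewrite /slice add0r ext_zeroE. Qed.

Lemma nonneg_slice phi a : nonneg phi -> nonneg (slice phi a).
Proof. by move=> phi0 k; exact: phi0. Qed.

Lemma ell1_slice phi a : nonneg phi -> ell1 phi -> ell1 (slice phi a).
Proof.
move=> phi0; rewrite !ell1E//; last exact: nonneg_slice.
exact/le_lt_trans/esum_coset_le.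
Qed.

Lemma maxconv_slice_le phi psi a b k : nonneg phi -> nonneg psi ->
  has_ubound (range phi) -> has_ubound (range psi) ->
  maxconv (slice phi a) (slice psi b) k <= maxconv phi psi (a + b + iota k).
Proof.
move=> phi0 psi0 ub1 ub2; apply: maxconv_le => t.
have := maxconv_ub (a + b + iota k) (a + iota t) phi0 psi0 ub1 ub2.
by rewrite opprD addrACA [a + b]addrC addrK -raddfB.
Qed.

Lemma lpnorm_cosets r phi : 1 <= r -> nonneg phi -> ell1 phi ->
  lpnorm r phi =
  powR (fine (\esum_(a in coset_reps iota) (powR (lpnorm r (slice phi a)) r)%:E)) r^-1.
Proof.
move=> r1 phi0 l1; rewrite [LHS]lpnormE; last exact: phi0.
rewrite /l1sum (esum_cosets iota_inj (w := fun x => (powR (phi x) r)%:E)); last first.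
  by move=> x; rewrite lee_fin powR_ge0.
congr (powR (fine _) _); apply: eq_esum => a _.
by rewrite powR_lpnorm//; [exact: nonneg_slice | exact: ell1_slice].
Qed.

Lemma exists_slice_lpnorm_gt0 r phi : 1 <= r -> admissible phi ->
  exists2 a, coset_reps iota a & 0 < lpnorm r (slice phi a).
Proof.
move=> r1 adm_phi; have [x phix] := admissible_neq0 adm_phi.
have [k xk] := coset_decomp iota x; case: adm_phi => l1 phi0 _.
exists (coset_rep iota x); first exact: coset_reps_rep.
apply: (lpnorm_gt0 (x := k)) => //; first exact: nonneg_slice.
  exact: ell1_slice.
by rewrite /slice -xk.
Qed.

End slices.

Section transfer.
Context {R : realType} {G K : zmodType} (iota : {additive K -> G})
  (iota_inj : injective iota).
Variables (p c : R) (f : K -> R) (g h : G -> R).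
Hypotheses (p1 : 1 < p) (f0 : nonneg f) (fl : ell1 f)
  (adm_g : admissible g) (adm_h : admissible h).
Hypothesis c_le : forall g' h' : K -> R,
  nonneg g' -> ell1 g' -> nonneg h' -> ell1 h' ->
  c * (lpnorm p g' * lpnorm (conj_exp p) h') <= lpnorm 1 (maxconv (maxconv f g') h').

Let q := conj_exp p.
Let F := ext_zero iota f.
Let Phi := maxconv (maxconv F g) h.
Let B := coset_reps iota.
Let u a := lpnorm p (slice iota g a).
Let v b := lpnorm q (slice iota h b).
Let Psi a b := maxconv (maxconv f (slice iota g a)) (slice iota h b).

Let q1 : 1 < q. Proof. exact: conj_exp_gt1. Qed.
Let g0 : nonneg g. Proof. by case: adm_g. Qed.
Let gl : ell1 g. Proof. by case: adm_g. Qed.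
Let h0 : nonneg h. Proof. by case: adm_h. Qed.
Let hl : ell1 h. Proof. by case: adm_h. Qed.
Let F0 : nonneg F. Proof. exact: nonneg_ext_zero. Qed.
Let Fl : ell1 F. Proof. exact: ell1_ext_zero. Qed.
Let Fg0 : nonneg (maxconv F g).
Proof. exact: maxconv_ge0 F0 g0 (ell1_ubound F0 Fl) (ell1_ubound g0 gl). Qed.
Let Fgl : ell1 (maxconv F g). Proof. exact: ell1_maxconv. Qed.
Let Phi0 : nonneg Phi.
Proof. exact: maxconv_ge0 Fg0 h0 (ell1_ubound Fg0 Fgl) (ell1_ubound h0 hl). Qed.
Let Phil : ell1 Phi. Proof. exact: ell1_maxconv. Qed.

Let ga0 a : nonneg (slice iota g a). Proof. exact: nonneg_slice. Qed.
Let gal a : ell1 (slice iota g a). Proof. exact: ell1_slice. Qed.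
Let hb0 b : nonneg (slice iota h b). Proof. exact: nonneg_slice. Qed.
Let hbl b : ell1 (slice iota h b). Proof. exact: ell1_slice. Qed.

Let fg0 a : nonneg (maxconv f (slice iota g a)).
Proof.
exact: maxconv_ge0 f0 (ga0 a) (ell1_ubound f0 fl) (ell1_ubound (ga0 a) (gal a)).
Qed.

Let fgl a : ell1 (maxconv f (slice iota g a)).
Proof. exact: ell1_maxconv. Qed.

Let Psi0 a b : nonneg (Psi a b).
Proof.
rewrite /Psi; exact: maxconv_ge0 (fg0 a) (hb0 b) (ell1_ubound (fg0 a) (fgl a))
  (ell1_ubound (hb0 b) (hbl b)).
Qed.

Let Psil a b : ell1 (Psi a b).
Proof. rewrite /Psi; exact: ell1_maxconv. Qed.

Let Psi_le a b k : Psi a b k <= Phi (a + b + iota k).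
Proof.
rewrite /Psi /Phi.
apply: le_trans
  (maxconv_slice_le iota a b k Fg0 h0 (ell1_ubound Fg0 Fgl) (ell1_ubound h0 hl)).
apply: le_maxconv_l => [j| | | |].
- have := maxconv_slice_le iota 0 a j F0 g0 (ell1_ubound F0 Fl) (ell1_ubound g0 gl).
  by rewrite slice_ext_zero// add0r.
- exact: nonneg_slice.
- exact: hb0.
- exact: ell1_ubound (nonneg_slice iota a Fg0) (ell1_slice iota_inj a Fg0 Fgl).
- exact: ell1_ubound (hb0 b) (hbl b).
Qed.

Let esum_row_le a : (\esum_(b in B) (lpnorm 1 (Psi a b))%:E <= l1sum Phi)%E.
Proof.
have Phi_ge0 x : (0 <= (Phi x)%:E)%E by rewrite lee_fin Phi0.
apply: le_trans (esum_translated_cosets_le iota_inj (w := fun x => (Phi x)%:E) a Phi_ge0).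
apply: le_esum => b _; rewrite lpnorm1E; [|exact: Psi0|exact: Psil].
by apply: le_esum => k _; rewrite lee_fin; exact: Psi_le.
Qed.

Let esum_col_le b : (\esum_(a in B) (lpnorm 1 (Psi a b))%:E <= l1sum Phi)%E.
Proof.
have Phi_ge0 x : (0 <= (Phi x)%:E)%E by rewrite lee_fin Phi0.
apply: le_trans (esum_translated_cosets_le iota_inj (w := fun x => (Phi x)%:E) b Phi_ge0).
apply: le_esum => a _; rewrite lpnorm1E; [|exact: Psi0|exact: Psil].
by apply: le_esum => k _; rewrite lee_fin (addrC b); exact: Psi_le.
Qed.

Let row_bound a : 0 <= c ->
  ((c * u a)%:E * (\esum_(b in B) (v b)%:E) <= l1sum Phi)%E.
Proof.
move=> c0; rewrite -ge0_esumZl ?mulr_ge0 ?lpnorm_ge0//; last first.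
  by move=> b; rewrite lee_fin lpnorm_ge0.
apply: le_trans (esum_row_le a); apply: le_esum => b _.
by rewrite -EFinM lee_fin -mulrA; exact: c_le.
Qed.

Let col_bound b : 0 <= c ->
  ((c * v b)%:E * (\esum_(a in B) (u a)%:E) <= l1sum Phi)%E.
Proof.
move=> c0; rewrite -ge0_esumZl ?mulr_ge0 ?lpnorm_ge0//; last first.
  by move=> a; rewrite lee_fin lpnorm_ge0.
apply: le_trans (esum_col_le b); apply: le_esum => a _.
by rewrite -EFinM lee_fin mulrAC -mulrA; exact: c_le.
Qed.

Lemma maxconv_ext_zero_lower_bound : c * (lpnorm p g * lpnorm q h) <= lpnorm 1 Phi.
Proof.
have [c_le0|c0] := leP c 0.
  by apply: le_trans (lpnorm_ge0 1 Phi); rewrite mulr_le0_ge0 ?mulr_ge0 ?lpnorm_ge0.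
have L_eq := lpnorm1E Phi0 Phil.
rewrite mulrC -ler_pdivlMr//.
rewrite (lpnorm_cosets iota_inj (ltW p1) g0 gl) (lpnorm_cosets iota_inj (ltW q1) h0 hl).
apply: interpolation_lp_lq.
- exact: p1.
- by move=> a; exact: lpnorm_ge0.
- by move=> b; exact: lpnorm_ge0.
- exact: exists_slice_lpnorm_gt0 (ltW p1) adm_g.
- exact: exists_slice_lpnorm_gt0 (ltW q1) adm_h.
- move=> a _; rewrite EFinM lee_pdivlMr// muleAC -EFinM mulrC L_eq.
  exact: row_bound (ltW c0).
- move=> b _; rewrite EFinM lee_pdivlMr// muleAC -EFinM mulrC L_eq.
  exact: col_bound (ltW c0).
Qed.

End transfer.

Theorem mainTheorem10 (R : realType) (G K : zmodType) (iota : {additive K -> G})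
  (iota_inj : injective iota) (p : R) (f : K -> R) :
  1 < p -> ell1 f -> nonneg f ->
  gamma p (ext_zero iota f) = gamma p f.
Proof.
move=> p1 fl f0; apply/le_anti/andP; split.
- apply: le_gamma => g h adm_g adm_h.
  rewrite -(gamma_ratio_ext_zero iota_inj p1 f0 fl adm_g adm_h).
  by apply: gamma_le_ratio; exact: admissible_ext_zero.
- apply: le_gamma => g h adm_g adm_h; have q1 := conj_exp_gt1 p1.
  rewrite /gamma_ratio ler_pdivlMr; last by rewrite mulr_gt0 ?lpnorm_admissible_gt0 ?ltW.
  apply: (maxconv_ext_zero_lower_bound iota_inj p1 f0 fl adm_g adm_h) => g' h' *.
  exact: gamma_mul_le.
Qed.
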